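(* Let $u(\mathbf{x},\Gamma_{\epsilon\boldsymbol{\omega}})$ be the scattered field of the impenetrable scattering problem with the randomly perturbed boundary $\Gamma_{\epsilon\boldsymbol{\omega}}=\Gamma+\epsilon\sum_{j=1}^m\omega_j\mathbf{v}_j$, and write $u(\mathbf{x})=u(\mathbf{x},\Gamma)$. Then, for $\mathbf{x}$ in the exterior of the (perturbed) scatterers, $$\mathbb{E}[u](\mathbf{x})=\mathbb{M}^1[u](\mathbf{x})=u(\mathbf{x})+\frac{\epsilon^2}{3!}\sum_{i=1}^m\delta_{[\mathbf{v}_i,\mathbf{v}_i]}u(\mathbf{x})+\mathcal{O}(\epsilon^4),$$ $$\mathbb{M}^2[u](\mathbf{x})=u^2(\mathbf{x})+\frac{\epsilon^2}{3}\sum_{i=1}^m\Big((\delta_{\mathbf{v}_i}u(\mathbf{x}))^2+u(\mathbf{x})\,\delta_{[\mathbf{v}_i,\mathbf{v}_i]}u(\mathbf{x})\Big)+\mathcal{O}(\epsilon^4),$$ and for every integer $n>2$, $$\mathbb{M}^n[u](\mathbf{x})=u^n(\mathbf{x})+\frac{\epsilon^2}{3}\sum_{i=1}^m\left(\binom n2u^{n-2}(\mathbf{x})(\delta_{\mathbf{v}_i}u(\mathbf{x}))^2+\binom n1u^{n-1}(\mathbf{x})\frac12\delta_{[\mathbf{v}_i,\mathbf{v}_i]}u(\mathbf{x})\right)+\mathcal{O}(\epsilon^4)$$ as $\epsilon\to0$.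
   Context: $D\subset\mathbb{R}^2$ is a bounded simply connected open set with smooth boundary $\Gamma$. For a boundary $\Gamma'$, the scattered field $u(\cdot,\Gamma')$ is defined outside the scatterer bounded by $\Gamma'$: the total field $u_{\rm tot}=\phi+u$ (with $\phi$ a plane wave or point-source incident field) satisfies $\nabla\cdot\alpha\nabla u_{\rm tot}+k^2u_{\rm tot}=0$ ($\alpha>0$, $k>0$ constants) in the exterior, with a sound-soft, sound-hard, or impedance boundary condition on $\Gamma'$, and $u$ satisfies the Sommerfeld radiation condition. The velocity fields $\mathbf{v}_1,\dots,\mathbf{v}_m\in C^\infty(\mathbb{R}^2,\mathbb{R}^2)$ have compact support in a band around $\Gamma$; $\delta_{\mathbf{v}_{i_1}}u$, $\delta_{[\mathbf{v}_{i_1},\mathbf{v}_{i_2}]}u,\dots$ denote the first, second, ... order shape derivatives of $u$ with respect to these velocity fields, and the field is assumed to admit the multivariate shape Taylor expansion $u(\mathbf{x},\Gamma_{\epsilon\boldsymbol\omega})=u(\mathbf{x})+\sum_{q=1}^{N}\frac{\epsilon^q}{q!}\sum_{i_1,\dots,i_q=1}^m\big(\prod_{j=1}^q\omega_{i_j}\big)\delta_{[\mathbf{v}_{i_1},\dots,\mathbf{v}_{i_q}]}u(\mathbf{x})+\mathcal{O}(\epsilon^{N+1})$ uniformly in $\boldsymbol\omega$. The random vector $\boldsymbol{\omega}=(\omega_1,\dots,\omega_m)$ has independent components, each uniformly distributed on $[-1,1]$, with density $P$. The $n$th moment is $\mathbb{M}^n[u](\mathbf{x})=\int[u(\mathbf{x},\Gamma_{\epsilon\boldsymbol\omega})]^nP(\boldsymbol\omega)\,d\boldsymbol\omega$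 and $\mathbb{E}[u]=\mathbb{M}^1[u]$. *)

From HB Require Import structures.
From mathcomp Require Import all_boot all_order all_algebra.
From mathcomp Require Import all_classical all_reals all_analysis.
From mathcomp Require Import complex.
Set Implicit Arguments. Unset Strict Implicit. Unset Printing Implicit Defensive.
Import Order.TTheory GRing.Theory Num.Theory.
Local Open Scope classical_set_scope.
Local Open Scope ring_scope.

Lemma ltN11 (R : realType) : (-1 < 1 :> R).
Proof. by rewrite (@lt_trans _ _ 0) ?oppr_lt0 ?ltr01. Qed.

Definition cR (R : realType) (r : R) : R[i] := Complex r 0.

Definition cabs (R : realType) (z : R[i]) : R :=
  Num.sqrt (complex.Re z ^+ 2 + complex.Im z ^+ 2).

Definition cexpect (d : measure_display) (T : measurableType d) (R : realType)
  (P : probability T R) (f : T -> R[i]) : R[i] :=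
  Complex (Rintegral P setT (fun t => complex.Re (f t)))
          (Rintegral P setT (fun t => complex.Im (f t))).

(* n-th moment  M^n[u] = E[ u(x, Gamma_{eps omega})^n ], with the random vector
   omega = (omega_1, ..., omega_m) given by random variables on (T, P), and
   U eps w = u(x, Gamma_{eps w}) for the fixed observation point x. *)
Definition moment (d : measure_display) (T : measurableType d) (R : realType)
  (P : probability T R) (m : nat) (omega : 'I_m -> {RV P >-> R})
  (U : R -> ('I_m -> R) -> R[i]) (n : nat) (eps : R) : R[i] :=
  cexpect P (fun t => U eps (fun i => omega i t) ^+ n).

Definition mutually_independent (d : measure_display) (T : measurableType d)
  (R : realType) (P : probability T R) (m : nat) (omega : 'I_m -> {RV P >-> R}) :=
  forall B : 'I_m -> set R, (forall i, measurable (B i)) ->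
    P (\bigcap_(i in [set: 'I_m]) (omega i @^-1` B i)) =
    (\prod_(i < m) P (omega i @^-1` B i))%E.

Definition uniform_m11 (d : measure_display) (T : measurableType d)
  (R : realType) (P : probability T R) (X : {RV P >-> R}) :=
  forall A : set R, measurable A ->
    P (X @^-1` A) = uniform_prob (ltN11 R) A.

Definition eq_O4 (R : realType) (f g : R -> R[i]) :=
  exists C delta : R, 0 < delta /\
    forall eps : R, `|eps| < delta -> cabs (f eps - g eps) <= C * `|eps| ^+ 4.

(* The multivariate shape Taylor expansion of order N, uniformly in
   omega in [-1,1]^m:
   U eps w = u0 + sum_{q=1}^N eps^q/q! sum_{i_1..i_q} (prod_j w_{i_j})
                    D q (i_1,...,i_q) + O(eps^(N+1)),
   where D q (i_1,...,i_q) = delta_{[v_{i_1},...,v_{i_q}]} u (x). *)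
Definition shape_taylor (R : realType) (m N : nat)
  (U : R -> ('I_m -> R) -> R[i]) (u0 : R[i])
  (D : forall q : nat, q.-tuple 'I_m -> R[i]) :=
  exists C delta : R, 0 < delta /\
    forall eps : R, `|eps| < delta ->
    forall w : 'I_m -> R, (forall i, -1 <= w i <= 1) ->
      cabs (U eps w -
            (u0 + \sum_(1 <= q < N.+1)
                    cR (eps ^+ q / (q`!)%:R) *
                    \sum_(s : q.-tuple 'I_m) cR (\prod_(j <- s) w j) * D q s))
        <= C * `|eps| ^+ N.+1.

(* Writing eps^k/k! times the k-th shape derivative term as a homogeneous
   polynomial of degree k in omega, the shape Taylor formula and the binomial
   theorem show that, uniformly on the cube [-1,1]^m, u(x, Gamma_{eps omega})^n
   equals a polynomial of degree 3 in eps up to O(eps^4), whose eps^k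
   coefficient is a polynomial in omega homogeneous of degree k.  For independent
   omega_i uniform on [-1,1], E[prod_i omega_i^(e_i)] = prod_i E[omega^(e_i)]
   vanishes unless every e_i is even and E[omega_i omega_j] = delta_ij / 3; hence
   the eps and eps^3 terms have mean zero and the eps^2 term gives the formula.
   The product rule for the moments follows from independence of events by
   approximating each omega_i^(e_i) with the step function equal to its mean on
   each cell of a uniform grid, for which the expectation is computed exactly. *)

From HB Require Import structures.
From mathcomp Require Import all_boot all_order all_algebra.
From mathcomp Require Import all_classical all_reals all_analysis.
From mathcomp Require Import complex.
From mathcomp Require Import ring lra.
Import Order.TTheory GRing.Theory Num.Theory.
Local Open Scope classical_set_scope.
Local Open Scope ring_scope.
Set Implicit Arguments. Unset Strict Implicit. Unset Printing Implicit Defensive.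

Section ComplexNorm.
Variable R : realType.
Implicit Types (z w : R[i]) (r s : R).

Lemma cRE r : cR r = (r%:C)%C. Proof. by []. Qed.
Lemma cR0 : cR 0 = 0 :> R[i]. Proof. by []. Qed.
Lemma cRM r s : cR (r * s) = cR r * cR s. Proof. by rewrite !cRE rmorphM. Qed.
Lemma cRX r n : cR (r ^+ n) = cR r ^+ n. Proof. by rewrite !cRE rmorphXn. Qed.
Lemma cRV r : cR r^-1 = (cR r)^-1. Proof. by rewrite !cRE fmorphV. Qed.
Lemma cRn n : cR (n%:R : R) = n%:R. Proof. by rewrite cRE rmorph_nat. Qed.

Lemma cabsC z : ((cabs z)%:C)%C = `|z|.
Proof. by rewrite normc_def. Qed.
Lemma cabs_ge0 z : 0 <= cabs z.
Proof. by rewrite /cabs sqrtr_ge0. Qed.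
Lemma cabsM z w : cabs (z * w) = cabs z * cabs w.
Proof. by apply: complexI; rewrite rmorphM /= !cabsC normrM. Qed.
Lemma cabsX z n : cabs (z ^+ n) = cabs z ^+ n.
Proof. by apply: complexI; rewrite rmorphXn /= !cabsC normrX. Qed.
Lemma ler_cabsD z w : cabs (z + w) <= cabs z + cabs w.
Proof. by rewrite -lecR rmorphD /= !cabsC ler_normD. Qed.
Lemma cabs_cR r : cabs (cR r) = `|r|.
Proof. by rewrite /cabs /= expr0n addr0 sqrtr_sqr. Qed.

Lemma Re_le_cabs z : `|complex.Re z| <= cabs z.
Proof. by rewrite /cabs -sqrtr_sqr ler_wsqrtr // lerDl sqr_ge0. Qed.
Lemma Im_le_cabs z : `|complex.Im z| <= cabs z.
Proof. by rewrite /cabs -sqrtr_sqr ler_wsqrtr // lerDr sqr_ge0. Qed.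
Lemma cabs_le_ReIm z : cabs z <= `|complex.Re z| + `|complex.Im z|.
Proof.
rewrite /cabs -[X in _ <= X]ger0_norm ?addr_ge0 // -sqrtr_sqr ler_wsqrtr //.
by rewrite sqrrD !real_normK ?num_real // -addrA lerD2l lerDr mulrn_wge0 // mulr_ge0.
Qed.

Lemma ReD z w : complex.Re (z + w) = complex.Re z + complex.Re w.
Proof. by case: z; case: w. Qed.
Lemma ImD z w : complex.Im (z + w) = complex.Im z + complex.Im w.
Proof. by case: z; case: w. Qed.
Lemma ReM z w :
  complex.Re (z * w) = complex.Re z * complex.Re w - complex.Im z * complex.Im w.
Proof. by case: z; case: w. Qed.
Lemma ImM z w :
  complex.Im (z * w) = complex.Re z * complex.Im w + complex.Im z * complex.Re w.
Proof. by case: z => a b; case: w => c d /=. Qed.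

End ComplexNorm.

Lemma ler_norm_subXn (R : numDomainType) (x y M : R) n :
  `|x| <= M -> `|y| <= M -> `|x ^+ n - y ^+ n| <= n%:R * M ^+ n.-1 * `|x - y|.
Proof.
move=> xM yM; have M0 : 0 <= M := le_trans (normr_ge0 _) xM.
rewrite subrXX normrM mulrC ler_wpM2r //.
apply: le_trans (ler_norm_sum _ _ _) _.
rewrite mulr_natl -[X in _ *+ X](card_ord n) -sumr_const ler_sum // => i _.
have -> : M ^+ n.-1 = M ^+ (n.-1 - i) * M ^+ i.
  by rewrite -exprD subnK // -ltnS (leq_trans (ltn_ord i)) // leqSpred.
by rewrite normrM !normrX ler_pM ?exprn_ge0 // lerXn2r ?nnegrE.
Qed.

Lemma ler_cabs_subXn (R : realType) (a b : R[i]) (M : R) n :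
  cabs a <= M -> cabs b <= M -> cabs (a ^+ n - b ^+ n) <= n%:R * M ^+ n.-1 * cabs (a - b).
Proof.
have normcE z : cabs z <= M -> `|z| <= (M%:C)%C by rewrite -cabsC lecR.
move=> /normcE aM /normcE bM.
by rewrite -lecR !rmorphM rmorphXn rmorph_nat /= !cabsC ler_norm_subXn.
Qed.

Lemma ler_norm_subM (R : numDomainType) (a1 b1 a2 b2 : R) : `|b1| <= 1 -> `|a2| <= 1 ->
  `|a1 * b1 - a2 * b2| <= `|a1 - a2| + `|b1 - b2|.
Proof.
move=> b11 a21; have -> : a1 * b1 - a2 * b2 = (a1 - a2) * b1 + a2 * (b1 - b2) by ring.
by rewrite (le_trans (ler_normD _ _)) // !normrM lerD ?ler_piMr ?ler_piMl.
Qed.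

Lemma ler_norm_subprod (R : numDomainType) (I : Type) (r : seq I) (F G : I -> R) :
  (forall i, `|F i| <= 1) -> (forall i, `|G i| <= 1) ->
  `|\prod_(i <- r) F i - \prod_(i <- r) G i| <= \sum_(i <- r) `|F i - G i|.
Proof.
move=> F1 G1; elim: r => [|a r IH]; first by rewrite !big_nil subrr normr0.
rewrite !big_cons (le_trans (ler_norm_subM _ _ _ (G1 a))) ?lerD2l //.
by rewrite normr_prod prodr_ile1 // => i _; rewrite normr_ge0 F1.
Qed.

Lemma prod_indic (R : numDomainType) (U : Type) (J : finType) (A : J -> set U) (x : U) :
  \prod_(i : J) (\1_(A i) x : R) = \1_(\bigcap_(i in [set: J]) A i) x.
Proof.
rewrite indicE; case: (pselect (forall i, A i x)) => [HA|HA].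
  by rewrite big1 ?mem_set // => i _; rewrite indicE mem_set.
have [i Hi] := (existsNP _).2 HA.
by rewrite (bigD1 i) //= indicE memNset // mul0r memNset // => /(_ i I).
Qed.

Lemma prod_count_mem (I : finType) (V : comPzSemiRingType) (s : seq I) (w : I -> V) :
  \prod_(j <- s) w j = \prod_i w i ^+ count_mem i s.
Proof.
elim: s => [|a s IH]; first by rewrite big_nil big1 // => i _; rewrite expr0.
rewrite big_cons IH /=; under [RHS]eq_bigr do rewrite exprD.
rewrite big_split /=; congr (_ * _).
rewrite (bigD1 a) //= eqxx expr1 big1 ?mulr1 // => i /negbTE.
by rewrite eq_sym => ->; rewrite expr0.
Qed.

Lemma size_count_mem (I : finType) (s : seq I) : size s = (\sum_i count_mem i s)%N.
Proof.
elim: s => [|a s IH]; first by rewrite big1.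
rewrite /= IH big_split /= [RHS]addnC -addn1; congr (_ + _)%N.
rewrite (bigD1 a) //= eqxx big1 // => i /negbTE.
by rewrite eq_sym => ->.
Qed.

Lemma odd_size_count_mem (I : finType) (s : seq I) :
  odd (size s) -> exists i, odd (count_mem i s).
Proof.
rewrite size_count_mem => odd_s; apply: contrapT => even_s; move: odd_s; apply/negP.
apply: (big_ind (fun x => ~~ odd x)) => // [x y ox oy|i _].
  by rewrite oddD (negbTE ox) (negbTE oy).
by apply/negP => oi; apply: even_s; exists i.
Qed.

Lemma sum_tuple1 (I : finType) (V : nmodType) (F : 1.-tuple I -> V) :
  \sum_s F s = \sum_i F [tuple i].
Proof.
rewrite (reindex (fun i : I => [tuple i])) //.
by exists (fun s => thead s) => [i _ //|[[|a [|b l]] //= Hs] _]; apply: val_inj.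
Qed.

Lemma sum_tuple2 (I : finType) (V : nmodType) (F : 2.-tuple I -> V) :
  \sum_s F s = \sum_i \sum_j F [tuple i; j].
Proof.
rewrite pair_big /= (reindex (fun p : I * I => [tuple p.1; p.2])) //.
exists (fun s => (thead s, thead (behead_tuple s))) => [[i j] _ //|].
by move=> [[|a [|b [|c l]]] //= Hs] _; apply: val_inj.
Qed.

Lemma sum_diag (I : finType) (V : pzSemiRingType) (c : V) (F : I -> I -> V) :
  \sum_i \sum_j (if i == j then c else 0) * F i j = c * \sum_i F i i.
Proof.
rewrite mulr_sumr; apply: eq_bigr => i _; rewrite (bigD1 i) //= eqxx big1 ?addr0 //.
by move=> j /negbTE; rewrite eq_sym => ->; rewrite mul0r.
Qed.

Section BoundedOn.
Variables (R : realType) (X : Type) (A : set X).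
Implicit Types f g : X -> R[i].

Definition bounded_on f := exists M : R, forall x, A x -> cabs (f x) <= M.

Lemma bounded_on_cst (z : R[i]) : bounded_on (fun=> z).
Proof. by exists (cabs z). Qed.

Lemma bounded_onD f g : bounded_on f -> bounded_on g -> bounded_on (fun x => f x + g x).
Proof.
move=> [M fM] [M' gM']; exists (M + M') => x Ax.
exact: le_trans (ler_cabsD _ _) (lerD (fM x Ax) (gM' x Ax)).
Qed.

Lemma bounded_onM f g : bounded_on f -> bounded_on g -> bounded_on (fun x => f x * g x).
Proof.
move=> [M fM] [M' gM']; exists (M * M') => x Ax.
by rewrite cabsM ler_pM ?cabs_ge0 ?fM ?gM'.
Qed.

Lemma bounded_onX f n : bounded_on f -> bounded_on (fun x => f x ^+ n).
Proof.
move=> bf; elim: n => [|n IH]; first exact: bounded_on_cst.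
have -> : (fun x => f x ^+ n.+1) = fun x => f x * f x ^+ n.
  by apply: funext => x; rewrite exprS.
exact: bounded_onM.
Qed.

Lemma bounded_on_sum (I : Type) (r : seq I) (F : I -> X -> R[i]) :
  (forall i, bounded_on (F i)) -> bounded_on (fun x => \sum_(i <- r) F i x).
Proof.
move=> bF; elim: r => [|i r IH].
  have -> : (fun x => \sum_(i <- [::]) F i x) = fun=> 0.
    by apply: funext => x; rewrite big_nil.
  exact: bounded_on_cst.
have -> : (fun x => \sum_(j <- i :: r) F j x) = fun x => F i x + \sum_(j <- r) F j x.
  by apply: funext => x; rewrite big_cons.
exact: bounded_onD.
Qed.

End BoundedOn.

Ltac bounded_on_closure :=
  repeat match goal with
  | |- bounded_on _ (fun _ => _ + _) => apply: bounded_onD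
  | |- bounded_on _ (fun _ => _ * _) => apply: bounded_onM
  | |- bounded_on _ (fun _ => _ ^+ _) => apply: bounded_onX
  | |- bounded_on _ (fun _ => \sum_(_ <- _) _) => apply: bounded_on_sum => ?
  | |- bounded_on _ (fun _ => \sum_(_ < _) _) => apply: bounded_on_sum => ?
  | |- _ => first [assumption | exact: bounded_on_cst]
  end.

(** * Third-order expansion of the shape Taylor polynomial *)

Lemma exprD_trunc4 (C : comPzRingType) (u x : C) n :
  (u + x) ^+ n = u ^+ n + 'C(n, 1)%:R * u ^+ (n - 1) * x
    + 'C(n, 2)%:R * u ^+ (n - 2) * x ^+ 2 + 'C(n, 3)%:R * u ^+ (n - 3) * x ^+ 3
    + x ^+ 4 * \sum_(k < n) 'C(n, k + 4)%:R * u ^+ (n - (k + 4)) * x ^+ k.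
Proof.
pose F i := 'C(n, i)%:R * u ^+ (n - i) * x ^+ i.
have -> : (u + x) ^+ n = \sum_(0 <= i < n + 4) F i.
  rewrite exprDn -(big_mkord xpredT (fun i => u ^+ (n - i) * x ^+ i *+ 'C(n, i))).
  have n1_le_n4 : (n.+1 <= n + 4)%N by rewrite -addn1 leq_add2l.
  rewrite (big_cat_nat (leq0n _) n1_le_n4) [\sum_(n.+1 <= i < n + 4) _]big1_seq.
    by rewrite Monoid.mulm1; apply: eq_bigr => i _; rewrite /F -mulr_natl; ring.
  move=> i /andP[_]; rewrite mem_index_iota => /andP[ni _].
  by rewrite /F bin_small // mul0r mul0r.
rewrite addn4 big_ltn // big_ltn // big_ltn // big_ltn // -{1}[4%N]add0n big_addn -addn4 addnK.
rewrite big_mkord mulr_sumr /F subn0 bin0 mul1r mulr1 expr1.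
rewrite !addrA; congr (_ + _); apply: eq_bigr => k _; rewrite exprD; ring.
Qed.

Section PowerExpansion.
Variables (C : comPzRingType) (n : nat) (u : C).

Definition pow_expand3 (a1 a2 a3 e : C) : C :=
  u ^+ n + e * ('C(n, 1)%:R * u ^+ (n - 1) * a1)
  + e ^+ 2 * ('C(n, 1)%:R * u ^+ (n - 1) * a2 + 'C(n, 2)%:R * u ^+ (n - 2) * a1 ^+ 2)
  + e ^+ 3 * ('C(n, 1)%:R * u ^+ (n - 1) * a3
              + 2%:R * 'C(n, 2)%:R * u ^+ (n - 2) * (a1 * a2)
              + 'C(n, 3)%:R * u ^+ (n - 3) * a1 ^+ 3).

Definition pow_expand_rem (a1 a2 a3 b e : C) : C :=
  let z := a2 + e * a3 + e ^+ 2 * b in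
  let y := a1 + e * z in
  'C(n, 1)%:R * u ^+ (n - 1) * b
  + 'C(n, 2)%:R * u ^+ (n - 2) * (2%:R * a1 * (a3 + e * b) + z ^+ 2)
  + 'C(n, 3)%:R * u ^+ (n - 3) * (3%:R * a1 ^+ 2 * z + 3%:R * e * a1 * z ^+ 2 + e ^+ 2 * z ^+ 3)
  + y ^+ 4 * \sum_(k < n) 'C(n, k + 4)%:R * u ^+ (n - (k + 4)) * (e * y) ^+ k.

Lemma exprD_expand3 (a1 a2 a3 b e : C) :
  (u + (e * a1 + e ^+ 2 * a2 + e ^+ 3 * a3 + e ^+ 4 * b)) ^+ n =
  pow_expand3 a1 a2 a3 e + e ^+ 4 * pow_expand_rem a1 a2 a3 b e.
Proof.
rewrite /pow_expand_rem; set z := a2 + _; set y := a1 + _.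
have -> : e * a1 + e ^+ 2 * a2 + e ^+ 3 * a3 + e ^+ 4 * b = e * y by rewrite /y /z; ring.
by rewrite exprD_trunc4 /pow_expand3 /y /z; ring.
Qed.

End PowerExpansion.

Section MonomialSums.
Variables (R : realType) (m : nat).

Definition monsum (I : finType) (f : I -> seq 'I_m) (c : I -> R[i]) (w : 'I_m -> R) : R[i] :=
  \sum_i cR (\prod_(j <- f i) w j) * c i.

Lemma monsumZ (I : finType) f c z w :
  z * @monsum I f c w = monsum f (fun i => z * c i) w.
Proof. by rewrite /monsum mulr_sumr; apply: eq_bigr => i _; rewrite mulrCA. Qed.

Lemma monsumM (I J : finType) f g c c' w :
  @monsum I f c w * @monsum J g c' w =
  monsum (fun p : I * J => f p.1 ++ g p.2) (fun p => c p.1 * c' p.2) w.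
Proof.
rewrite /monsum mulr_suml; under eq_bigr do rewrite mulr_sumr.
rewrite pair_big /=; apply: eq_bigr => p _.
by rewrite big_cat cRM /=; ring.
Qed.

End MonomialSums.

Section ShapeExpansion.
Variables (R : realType) (m N : nat) (U : R -> ('I_m -> R) -> R[i]) (u0 : R[i])
  (D : forall q : nat, q.-tuple 'I_m -> R[i]).

Definition in_cube (w : 'I_m -> R) := forall i, -1 <= w i <= 1.

Definition shape_term k : ('I_m -> R) -> R[i] :=
  monsum (fun s : k.-tuple 'I_m => tval s) (@D k).

Definition shape_coef k w := cR (k`!%:R)^-1 * shape_term k w.

Definition shape_poly (eps : R) w :=
  u0 + \sum_(1 <= k < N.+1) cR (eps ^+ k / k`!%:R) * shape_term k w.

Definition shape_tail (eps : R) w :=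
  \sum_(4 <= k < N.+1) cR (eps ^+ (k - 4)) * shape_coef k w.

Lemma shape_poly_split eps w : (3 <= N)%N ->
  shape_poly eps w = u0 + (cR eps * shape_coef 1 w + cR eps ^+ 2 * shape_coef 2 w
                           + cR eps ^+ 3 * shape_coef 3 w + cR eps ^+ 4 * shape_tail eps w).
Proof.
move=> N3; have N2 : (2 < N.+1)%N by rewrite ltnS ltnW.
rewrite /shape_poly big_ltn ?(ltn_trans _ N2) // big_ltn // big_ltn ?ltnS // !addrA.
congr (_ + _); first by rewrite /shape_coef !mulrA -!cRX -!cRM expr1.
rewrite /shape_tail mulr_sumr; apply: eq_big_nat => k /andP[k4 _].
by rewrite mulrA -cRX -cRM -exprD subnKC // /shape_coef mulrA -cRM.
Qed.

Definition near0_cube : set (R * ('I_m -> R)) := [set p | `|p.1| <= 1 /\ in_cube p.2].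

Lemma in_cube_prod w (s : seq 'I_m) : in_cube w -> `|\prod_(j <- s) w j| <= 1.
Proof.
move=> w1; rewrite normr_prod; apply: prodr_ile1 => j _.
by rewrite normr_ge0 ler_norml w1.
Qed.

Lemma bounded_shape_term k : bounded_on near0_cube (fun p => shape_term k p.2).
Proof.
apply: bounded_on_sum => s; apply: bounded_onM; last exact: bounded_on_cst.
by exists 1 => p [_ w1]; rewrite cabs_cR in_cube_prod.
Qed.

Lemma bounded_shape_coef k : bounded_on near0_cube (fun p => shape_coef k p.2).
Proof. by apply: bounded_onM; [exact: bounded_on_cst | exact: bounded_shape_term]. Qed.

Lemma bounded_eps : bounded_on near0_cube (fun p => cR p.1).
Proof. by exists 1 => p [e1 _]; rewrite cabs_cR. Qed.

Lemma bounded_shape_tail : bounded_on near0_cube (fun p => shape_tail p.1 p.2).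
Proof.
apply: bounded_on_sum => k; apply: bounded_onM; last exact: bounded_shape_coef.
by exists 1 => p [e1 _]; rewrite cabs_cR normrX exprn_ile1.
Qed.

Lemma bounded_shape_poly : (3 <= N)%N -> bounded_on near0_cube (fun p => shape_poly p.1 p.2).
Proof.
move=> N3; under eq_fun do rewrite shape_poly_split //.
have := bounded_eps; have := bounded_shape_tail.
have := bounded_shape_coef 1; have := bounded_shape_coef 2; have := bounded_shape_coef 3.
move=> *; bounded_on_closure.
Qed.

Lemma bounded_pow_expand_rem n : bounded_on near0_cube (fun p =>
  pow_expand_rem n u0 (shape_coef 1 p.2) (shape_coef 2 p.2) (shape_coef 3 p.2)
                      (shape_tail p.1 p.2) (cR p.1)).
Proof.
have := bounded_eps; have := bounded_shape_tail.
have := bounded_shape_coef 1; have := bounded_shape_coef 2; have := bounded_shape_coef 3.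
by move=> *; rewrite /pow_expand_rem; bounded_on_closure.
Qed.

Lemma shape_taylor_exprn n : (3 <= N)%N -> shape_taylor N U u0 D ->
  exists C delta : R, 0 < delta /\ forall eps w, `|eps| < delta -> in_cube w ->
    cabs (U eps w ^+ n - pow_expand3 n u0 (shape_coef 1 w) (shape_coef 2 w)
                                       (shape_coef 3 w) (cR eps)) <= C * `|eps| ^+ 4.
Proof.
move=> N3 [C [delta [delta_gt0 HU]]].
have [MG HG] := bounded_shape_poly N3.
have [MR HR] := bounded_pow_expand_rem n.
pose K := MG + `|C|.
exists (n%:R * K ^+ n.-1 * `|C| + MR), (Num.min delta 1).
split=> [|eps w]; first by rewrite lt_min delta_gt0 ltr01.
rewrite lt_min => /andP[e_delta e1] w_cube.
have e1' : `|eps| <= 1 := ltW e1.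
have near : near0_cube (eps, w) by [].
have UG : cabs (U eps w - shape_poly eps w) <= `|C| * `|eps| ^+ 4.
  apply: le_trans (HU eps e_delta w w_cube) _.
  apply: le_trans (ler_wpM2r (exprn_ge0 _ (normr_ge0 _)) (ler_norm C)) _.
  by rewrite ler_wpM2l // ler_wiXn2l.
have GK : cabs (shape_poly eps w) <= K by rewrite (le_trans (HG _ near)) ?lerDl.
have UK : cabs (U eps w) <= K.
  rewrite -(subrK (shape_poly eps w) (U eps w)) addrC.
  apply: le_trans (ler_cabsD _ _) (lerD (HG _ near) (le_trans UG _)).
  by rewrite ler_piMr // exprn_ile1.
have K0 : 0 <= K := le_trans (cabs_ge0 _) GK.
have -> : U eps w ^+ n - pow_expand3 n u0 (shape_coef 1 w) (shape_coef 2 w)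
                                       (shape_coef 3 w) (cR eps) =
    (U eps w ^+ n - shape_poly eps w ^+ n) + cR eps ^+ 4 *
    pow_expand_rem n u0 (shape_coef 1 w) (shape_coef 2 w) (shape_coef 3 w)
                        (shape_tail eps w) (cR eps).
  by rewrite shape_poly_split // exprD_expand3; ring.
rewrite mulrDl; apply: le_trans (ler_cabsD _ _) (lerD _ _).
  apply: le_trans (ler_cabs_subXn _ UK GK) _.
  by rewrite -!mulrA ler_wpM2l // ler_wpM2l ?exprn_ge0.
by rewrite cabsM cabsX cabs_cR mulrC ler_wpM2r ?exprn_ge0 // (HR _ near).
Qed.

End ShapeExpansion.

(** * Moments of independent uniform variables *)

Section UniformMoments.
Variables (R : realType) (d : measure_display) (T : measurableType d)
  (P : probability T R) (m : nat) (omega : 'I_m -> {RV P >-> R}).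
Hypothesis omega_indep : mutually_independent omega.
Hypothesis omega_unif : forall i, uniform_m11 (omega i).
Import measurable_realfun.

Lemma measurable_preimage i (A : set R) : measurable A -> measurable (omega i @^-1` A).
Proof. by move=> mA; rewrite -[_ @^-1` _]setTI; exact: (measurable_funPT (omega i)). Qed.

Lemma prob_unif_itv i (a b : R) : -1 <= a -> a <= b -> b <= 1 ->
  P (omega i @^-1` `[a, b[%classic) = ((b - a) / 2)%:E.
Proof.
move=> a1 ab b1; rewrite omega_unif; last exact: measurable_itv.
rewrite /uniform_prob integral_uniform_pdf.
have -> : `[a, b[%classic `&` `[-1, 1]%classic = `[a, b[%classic :> set R.
  apply: setIidl => x /=; rewrite !in_itv /= => /andP[ax xb].
  by rewrite (le_trans a1 ax) ltW // (lt_le_trans xb b1).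
rewrite (eq_integral (fun=> (2^-1 : R)%:E)); last first.
  move=> x; rewrite inE /= in_itv /= => /andP[ax xb].
  by rewrite /uniform_pdf (le_trans a1 ax) /= ltW ?(lt_le_trans xb b1) // opprK.
rewrite integral_cst /= ?lebesgue_measure_itv /= ?lte_fin //.
case: ltP => [_|ba]; first by rewrite -EFinD -EFinM mulrC.
by rewrite (_ : b = a) ?subrr ?mul0r ?mule0 //; apply/eqP; rewrite eq_le ab ba.
Qed.

(* Expectations are taken on this event of probability one, on which U is
   controlled by the shape Taylor formula; the cube is half-open so that the
   grid cells below partition it. *)
Definition cube_event : set T :=
  \bigcap_(i in [set: 'I_m]) (omega i @^-1` `[-1, 1[%classic).

Lemma measurable_cube_event : measurable cube_event.
Proof.
apply: fin_bigcap_measurable; first exact: finite_finset.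
by move=> i _; apply: measurable_preimage; exact: measurable_itv.
Qed.

Lemma prob_cube_event : P cube_event = 1%E.
Proof.
rewrite /cube_event omega_indep => [|i]; last exact: measurable_itv.
rewrite big1 // => i _; rewrite prob_unif_itv ?lexx ?lerN10 //.
by rewrite opprK divff ?pnatr_eq0.
Qed.

Lemma cube_event_bounds t : cube_event t -> forall i, -1 <= omega i t < 1.
Proof. by move=> Ht i; have := Ht i I; rewrite /= in_itv. Qed.

Lemma cube_event_in_cube t : cube_event t -> in_cube (fun i => omega i t).
Proof. by move=> /cube_event_bounds Ht i; have /andP[-> /ltW] := Ht i. Qed.

Definition Ecube (g : T -> R) := Rintegral P cube_event g.

Definition bounded_rv (g : T -> R) :=
  measurable_fun setT g /\ exists M, forall t, cube_event t -> `|g t| <= M.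

Lemma bounded_rv_ext g h : g =1 h -> bounded_rv g -> bounded_rv h.
Proof. by move=> /funext ->. Qed.

Lemma bounded_rv_cst c : bounded_rv (fun=> c).
Proof. by split; [exact: measurable_cst | exists `|c|]. Qed.

Lemma bounded_rvD g h : bounded_rv g -> bounded_rv h -> bounded_rv (fun t => g t + h t).
Proof.
move=> [mg [M gM]] [mh [M' hM']]; split; first exact: measurable_funD.
by exists (M + M') => t Ht; rewrite (le_trans (ler_normD _ _)) ?lerD ?gM ?hM'.
Qed.

Lemma bounded_rvM g h : bounded_rv g -> bounded_rv h -> bounded_rv (fun t => g t * h t).
Proof.
move=> [mg [M gM]] [mh [M' hM']]; split; first exact: measurable_funM.
by exists (M * M') => t Ht; rewrite normrM ler_pM ?gM ?hM'.
Qed.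

Lemma bounded_rvB g h : bounded_rv g -> bounded_rv h -> bounded_rv (fun t => g t - h t).
Proof.
move=> bg bh; apply: (bounded_rv_ext _ (bounded_rvD bg (bounded_rvM (bounded_rv_cst (-1)) bh))).
by move=> t /=; rewrite mulN1r.
Qed.

Lemma bounded_rv_sum (I : Type) (r : seq I) (G : I -> T -> R) :
  (forall i, bounded_rv (G i)) -> bounded_rv (fun t => \sum_(i <- r) G i t).
Proof.
move=> bG; elim: r => [|a r IH].
  by apply: (bounded_rv_ext _ (bounded_rv_cst 0)) => t; rewrite big_nil.
by apply: (bounded_rv_ext _ (bounded_rvD (bG a) IH)) => t; rewrite big_cons.
Qed.

Lemma bounded_rv_prod (I : Type) (r : seq I) (G : I -> T -> R) :
  (forall i, bounded_rv (G i)) -> bounded_rv (fun t => \prod_(i <- r) G i t).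
Proof.
move=> bG; elim: r => [|a r IH].
  by apply: (bounded_rv_ext _ (bounded_rv_cst 1)) => t; rewrite big_nil.
by apply: (bounded_rv_ext _ (bounded_rvM (bG a) IH)) => t; rewrite big_cons.
Qed.

Lemma bounded_rv_indic (S : set T) : measurable S -> bounded_rv (\1_S).
Proof.
move=> mS; split; first exact: measurable_indic.
by exists 1 => t _; rewrite indicE; case: (_ \in _); rewrite ?normr0 ?normr1.
Qed.

Lemma bounded_rv_omegaX i n : bounded_rv (fun t => omega i t ^+ n).
Proof.
split; first exact/measurable_funX/measurable_funPT.
exists 1 => t /cube_event_bounds /(_ i) /andP[w1 /ltW w2].
by rewrite normrX exprn_ile1 // ler_norml w1.
Qed.

Lemma integrable_bounded_rv g : bounded_rv g -> P.-integrable cube_event (EFin \o g).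
Proof.
case=> mg [M gM]; apply: measurable_bounded_integrable.
- exact: measurable_cube_event.
- by have := prob_cube_event; rewrite /= => ->; rewrite ltry.
- exact: measurable_funS mg.
exists M; split; first exact: num_real.
by move=> y My t Ht; apply: le_trans (gM t Ht) (ltW My).
Qed.

Lemma Ecube_ext g h : {in cube_event, g =1 h} -> Ecube g = Ecube h.
Proof. by move=> gh; apply: eq_Rintegral. Qed.

Lemma EcubeD g h : bounded_rv g -> bounded_rv h -> Ecube (fun t => g t + h t) = Ecube g + Ecube h.
Proof.
move=> bg bh; apply: RintegralD;
  [exact: measurable_cube_event | exact: integrable_bounded_rv ..].
Qed.

Lemma EcubeZ c g : bounded_rv g -> Ecube (fun t => c * g t) = c * Ecube g.
Proof.
move=> bg; apply: RintegralZl;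
  [exact: measurable_cube_event | exact: integrable_bounded_rv].
Qed.

Lemma EcubeB g h : bounded_rv g -> bounded_rv h -> Ecube (fun t => g t - h t) = Ecube g - Ecube h.
Proof.
move=> bg bh; rewrite -mulN1r -EcubeZ // -EcubeD //; last exact: bounded_rvM (bounded_rv_cst _) bh.
by apply: Ecube_ext => t _; rewrite /= mulN1r.
Qed.

Lemma Ecube_cst c : Ecube (fun=> c) = c.
Proof.
rewrite /Ecube Rintegral_cst; last exact: measurable_cube_event.
by rewrite [fine _](_ : _ = fine 1%E) ?mulr1 //; congr fine; exact: prob_cube_event.
Qed.

Lemma Ecube_sum (I : Type) (r : seq I) (G : I -> T -> R) :
  (forall i, bounded_rv (G i)) ->
  Ecube (fun t => \sum_(i <- r) G i t) = \sum_(i <- r) Ecube (G i).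
Proof.
move=> bG; elim: r => [|a r IH].
  rewrite big_nil -[RHS](Ecube_cst 0).
  by apply: Ecube_ext => t _; rewrite big_nil.
rewrite big_cons -IH -EcubeD //; last exact: bounded_rv_sum.
by apply: Ecube_ext => t _; rewrite big_cons.
Qed.

Lemma ler_norm_Ecube g M : bounded_rv g -> (forall t, cube_event t -> `|g t| <= M) ->
  `|Ecube g| <= M.
Proof.
move=> bg gM; have [mg _] := bg.
apply: le_trans (le_normr_Rintegral measurable_cube_event (integrable_bounded_rv bg)) _.
have bag : bounded_rv (fun t => `|g t|).
  split; first exact: measurableT_comp.
  by case: bg => _ [M' gM']; exists M' => t Ht; rewrite normr_id gM'.
rewrite -[leRHS](Ecube_cst M) le_Rintegral //.
- exact: measurable_cube_event.
- exact: integrable_bounded_rv.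
- exact/integrable_bounded_rv/bounded_rv_cst.
Qed.

Lemma Ecube_indic (S : set T) : measurable S -> S `<=` cube_event -> Ecube (\1_S) = fine (P S).
Proof.
move=> mS S_cube; rewrite /Ecube /Rintegral integral_indic ?setIidl //.
exact: measurable_cube_event.
Qed.

(* (1/2) \int_{-1}^{1} x^e dx *)
Definition unif_moment (e : nat) : R := (1 - (-1) ^+ e.+1) / (2 * e.+1%:R).

Section GridApproximation.
Variable K : nat.
Hypothesis K_gt0 : (0 < K)%N.

Definition mesh : R := 2 / K%:R.
Definition grid (a : nat) : R := -1 + a%:R * mesh.
Definition cell (a : nat) : set R := `[grid a, grid a.+1[%classic.

Lemma mesh_gt0 : 0 < mesh.
Proof. by rewrite /mesh divr_gt0 // ltr0n. Qed.

Lemma gridS a : grid a.+1 = grid a + mesh.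
Proof. by rewrite /grid -addn1 natrD mulrDl mul1r addrA. Qed.

Lemma grid0 : grid 0 = -1.
Proof. by rewrite /grid mul0r addr0. Qed.

Lemma gridK : grid K = 1.
Proof.
rewrite /grid /mesh mulrCA mulfV ?mulr1 ?pnatr_eq0 -?lt0n //.
by rewrite addrC -[2]/(1 + 1) -addrA subrr addr0.
Qed.

Lemma grid_ge a : -1 <= grid a.
Proof. by rewrite /grid lerDl mulr_ge0 // ltW // mesh_gt0. Qed.

Lemma grid_le a : (a <= K)%N -> grid a <= 1.
Proof. by move=> aK; rewrite -gridK lerD2l ler_wpM2r ?ler_nat // ltW // mesh_gt0. Qed.

Lemma norm_grid_le1 a : (a <= K)%N -> `|grid a| <= 1.
Proof. by move=> aK; rewrite ler_norml grid_ge grid_le. Qed.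

Lemma cell_bounds (a : 'I_K) x : cell a x -> -1 <= x < 1.
Proof.
rewrite /cell /= in_itv /= => /andP[ax xb].
by rewrite (le_trans (grid_ge a) ax) /= (lt_le_trans xb) // grid_le.
Qed.

Lemma cell_cover x : -1 <= x < 1 -> exists a : 'I_K, cell a x.
Proof.
move=> /andP[x1 x2]; have y0 : 0 <= (x + 1) / mesh.
  by rewrite divr_ge0 ?subr_ge0 ?(ltW mesh_gt0) // -lerBlDr sub0r.
have /andP[ny yn] := truncn_itv y0; set n := Num.truncn _ in ny yn.
have nK : (n < K)%N.
  rewrite -(ltr_nat R) (le_lt_trans ny) // ltr_pdivrMr ?mesh_gt0 //.
  rewrite /mesh mulrCA mulfV ?mulr1 ?pnatr_eq0 -?lt0n // -[2]/(1 + 1) ltrD2r //.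
exists (Ordinal nK); rewrite /cell /= in_itv /=.
rewrite ler_pdivlMr ?mesh_gt0 // in ny; rewrite ltr_pdivrMr ?mesh_gt0 // in yn.
by rewrite /grid; apply/andP; split; lra.
Qed.

Lemma cell_uniq (a b : nat) x : cell a x -> cell b x -> a = b.
Proof.
have le_ab a' b' : grid a' <= x -> x < grid b'.+1 -> (a' <= b')%N.
  move=> ax xb; have := le_lt_trans ax xb.
  by rewrite /grid ltrD2l ltr_pM2r ?mesh_gt0 // ltr_nat ltnS.
rewrite /cell /= !in_itv /= => /andP[ax xa] /andP[bx xb].
by apply/eqP; rewrite eqn_leq !le_ab.
Qed.

Lemma prob_cell i (a : 'I_K) : P (omega i @^-1` cell a) = (mesh / 2)%:E.
Proof.
rewrite prob_unif_itv ?grid_ge ?grid_le // ?gridS ?lerDl ?(ltW mesh_gt0) //.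
by rewrite addrAC subrr add0r.
Qed.

(* The mean of [x ^+ e] over [cell a], so that [sum_cell_mean] is exact. *)
Definition cell_mean (e a : nat) : R :=
  (\sum_(k < e.+1) grid a.+1 ^+ (e - k) * grid a ^+ k) / e.+1%:R.

Lemma cell_meanE e a :
  cell_mean e a * mesh = (grid a.+1 ^+ e.+1 - grid a ^+ e.+1) / e.+1%:R.
Proof. by rewrite subrXX {1}gridS addrAC subrr add0r /cell_mean mulrAC [_ * mesh]mulrC. Qed.

Lemma sum_cell_mean e : \sum_(a < K) cell_mean e a * (mesh / 2) = unif_moment e.
Proof.
under eq_bigr do rewrite mulrA cell_meanE.
rewrite -(big_mkord xpredT (fun a => (grid a.+1 ^+ e.+1 - grid a ^+ e.+1) / e.+1%:R / 2)).
rewrite -!mulr_suml telescope_sumr // gridK grid0 expr1n /unif_moment.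
by rewrite invfM mulrA mulrAC.
Qed.

Lemma norm_cell_mean_le1 e (a : 'I_K) : `|cell_mean e a| <= 1.
Proof.
have [ga gb] := (norm_grid_le1 (ltnW (ltn_ord a)), norm_grid_le1 (ltn_ord a)).
rewrite normrM normfV normr_nat ler_pdivrMr ?ltr0n // mul1r.
apply: le_trans (ler_norm_sum _ _ _) _.
rewrite -[X in _ <= X%:R](card_ord e.+1) -sumr_const ler_sum // => k _.
by rewrite normrM !normrX mulr_ile1 ?exprn_ge0 ?exprn_ile1.
Qed.

Lemma cell_mean_approx e (a : 'I_K) x : cell a x -> `|x ^+ e - cell_mean e a| <= e%:R * mesh.
Proof.
move=> ax; have /andP[x1 /ltW x2] := cell_bounds ax.
have xn : `|x| <= 1 by rewrite ler_norml x1.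
have [ga gb] := (norm_grid_le1 (ltnW (ltn_ord a)), norm_grid_le1 (ltn_ord a)).
move: ax; rewrite /cell /= in_itv /= => /andP[ax xb]; have gS := gridS a.
have dA : `|x - grid a| <= mesh by rewrite ler_norml; apply/andP; split; lra.
have dB : `|x - grid a.+1| <= mesh by rewrite ler_norml; apply/andP; split; lra.
have -> : x ^+ e - cell_mean e a =
    (\sum_(k < e.+1) (x ^+ e - grid a.+1 ^+ (e - k) * grid a ^+ k)) / e.+1%:R.
  rewrite sumrB sumr_const card_ord /cell_mean -mulr_natr.
  by field; rewrite addrC natr1 pnatr_eq0.
rewrite normrM normfV normr_nat ler_pdivrMr ?ltr0n //.
apply: le_trans (ler_norm_sum _ _ _) _.
rewrite -[X in _ <= _ * X%:R](card_ord e.+1) -sumr_const mulr_sumr ler_sum // => k _.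
have ke : (k <= e)%N by rewrite -ltnS.
rewrite -{1}(subnK ke) exprD.
apply: le_trans (ler_norm_subM _ _ _ _) _; rewrite ?normrX ?exprn_ile1 //.
apply: le_trans (lerD (ler_norm_subXn _ xn gb) (ler_norm_subXn _ xn ga)) _.
rewrite !expr1n !mulr1 -[e in e%:R * mesh](subnK ke) natrD mulrDl.
by rewrite lerD ?ler_wpM2l.
Qed.

Definition step_monomial e (x : R) : R := \sum_(a < K) cell_mean e a * \1_(cell a) x.

Lemma step_monomial_cell e (a : 'I_K) x : cell a x -> step_monomial e x = cell_mean e a.
Proof.
move=> ax; rewrite /step_monomial (bigD1 a) //= big1 ?addr0.
  by rewrite indicE mem_set // mulr1.
move=> b ba; rewrite indicE memNset ?mulr0 // => bx.
by move/negP: ba; apply; apply/eqP/val_inj; exact: cell_uniq bx ax.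
Qed.

Lemma step_monomial_approx e x : -1 <= x < 1 ->
  `|x ^+ e - step_monomial e x| <= e%:R * mesh /\ `|step_monomial e x| <= 1.
Proof.
move=> /cell_cover [a ax]; rewrite (step_monomial_cell _ ax).
by split; [exact: cell_mean_approx | exact: norm_cell_mean_le1].
Qed.

Lemma bounded_rv_step_monomial e i : bounded_rv (fun t => step_monomial e (omega i t)).
Proof.
apply: bounded_rv_sum => a; apply: bounded_rvM; first exact: bounded_rv_cst.
by apply: bounded_rv_indic; apply: measurable_preimage; exact: measurable_itv.
Qed.

Variable E : 'I_m -> nat.

Definition cell_event (phi : {ffun 'I_m -> 'I_K}) : set T :=
  \bigcap_(i in [set: 'I_m]) (omega i @^-1` cell (phi i)).

Lemma measurable_cell_event phi : measurable (cell_event phi).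
Proof.
apply: fin_bigcap_measurable; first exact: finite_finset.
by move=> i _; apply: measurable_preimage; exact: measurable_itv.
Qed.

Lemma cell_event_sub phi : cell_event phi `<=` cube_event.
Proof. by move=> t Ht i _; have /cell_bounds := Ht i I; rewrite /= in_itv. Qed.

Lemma prod_step_monomialE t : \prod_i step_monomial (E i) (omega i t) =
  \sum_(phi : {ffun 'I_m -> 'I_K}) (\prod_i cell_mean (E i) (phi i)) * \1_(cell_event phi) t.
Proof.
rewrite /step_monomial bigA_distr_bigA /=; apply: eq_bigr => phi _.
by rewrite big_split /= /cell_event -prod_indic.
Qed.

Lemma Ecube_cell_event phi : Ecube (\1_(cell_event phi)) = \prod_(i < m) (mesh / 2).
Proof.
rewrite Ecube_indic; [|exact: measurable_cell_event | exact: cell_event_sub].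
rewrite /cell_event omega_indep => [|i]; last exact: measurable_itv.
by rewrite (eq_bigr (fun=> (mesh / 2)%:E)) => [|i _]; [rewrite prodEFin | exact: prob_cell].
Qed.

Lemma Ecube_prod_step_monomial :
  Ecube (fun t => \prod_i step_monomial (E i) (omega i t)) = \prod_i unif_moment (E i).
Proof.
have bI phi := bounded_rv_indic (measurable_cell_event phi).
rewrite (Ecube_ext (fun t _ => prod_step_monomialE t)) Ecube_sum; last first.
  by move=> phi; apply: bounded_rvM; [exact: bounded_rv_cst | exact: bI].
under [X in X = _]eq_bigr do rewrite EcubeZ // Ecube_cell_event -big_split /=.
rewrite -(bigA_distr_bigA (fun i (a : 'I_K) => cell_mean (E i) a * (mesh / 2))) /=.
by apply: eq_bigr => i _; exact: sum_cell_mean.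
Qed.

Lemma Ecube_prod_monomial_approx :
  `|Ecube (fun t => \prod_i omega i t ^+ E i) - \prod_i unif_moment (E i)|
    <= (\sum_i E i)%:R * mesh.
Proof.
have bX : bounded_rv (fun t => \prod_i omega i t ^+ E i).
  by apply: bounded_rv_prod => i; exact: bounded_rv_omegaX.
have bS : bounded_rv (fun t => \prod_i step_monomial (E i) (omega i t)).
  by apply: bounded_rv_prod => i; exact: bounded_rv_step_monomial.
rewrite -Ecube_prod_step_monomial -EcubeB //.
apply: ler_norm_Ecube => [|t /cube_event_bounds Ht].
  exact: bounded_rvB.
have approx i := step_monomial_approx (E i) (Ht i).
apply: le_trans (ler_norm_subprod _ _ _) _.
- move=> i; have /andP[w1 /ltW w2] := Ht i.
  by rewrite normrX exprn_ile1 // ler_norml w1.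
- by move=> i; case: (approx i).
by rewrite natr_sum mulr_suml ler_sum // => i _; case: (approx i).
Qed.

End GridApproximation.

Lemma Ecube_prod_monomial (E : 'I_m -> nat) :
  Ecube (fun t => \prod_i omega i t ^+ E i) = \prod_i unif_moment (E i).
Proof.
apply/eqP; rewrite -subr_eq0 -normr_le0; apply/unstable.ler_gtP => z z0.
pose c : R := (\sum_i E i)%:R * 2.
have c0 : 0 <= c by rewrite mulr_ge0.
pose K := (Num.truncn (c / z)).+1.
apply: le_trans (Ecube_prod_monomial_approx (ltn0Sn _ : (0 < K)%N) E) _.
have /andP[_ /ltW cK] := truncn_itv (divr_ge0 c0 (ltW z0)).
by rewrite /mesh mulrA -/c ler_pdivrMr ?ltr0n // -ler_pdivrMl // mulrC.
Qed.

Definition Ecube_monomial (s : seq 'I_m) := Ecube (fun t => \prod_(j <- s) omega j t).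

Lemma Ecube_monomialE s : Ecube_monomial s = \prod_i unif_moment (count_mem i s).
Proof.
by rewrite -Ecube_prod_monomial; apply: Ecube_ext => t _; exact: prod_count_mem.
Qed.

Lemma unif_moment_odd e : odd e -> unif_moment e = 0.
Proof. by move=> oe; rewrite /unif_moment -signr_odd /= oe expr0 subrr mul0r. Qed.

Lemma unif_moment0 : unif_moment 0 = 1.
Proof. by rewrite /unif_moment expr1 opprK mulr1 divff ?pnatr_eq0. Qed.

Lemma unif_moment2 : unif_moment 2 = 3^-1.
Proof.
rewrite /unif_moment -signr_odd /= expr1 opprK.
by rewrite -[1 + 1]/(2 : R) invfM mulrA divff ?mul1r ?pnatr_eq0.
Qed.

Lemma Ecube_monomial_odd s : odd (size s) -> Ecube_monomial s = 0.
Proof.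
move=> /odd_size_count_mem [i oi].
by rewrite Ecube_monomialE (bigD1 i) //= unif_moment_odd // mul0r.
Qed.

Lemma Ecube_monomial2 (a b : 'I_m) : Ecube_monomial [:: a; b] = if a == b then 3^-1 else 0.
Proof.
rewrite Ecube_monomialE; case: eqP => [<-|/eqP ab].
  rewrite (bigD1 a) //= eqxx /= unif_moment2 big1 ?mulr1 // => i /negbTE.
  by rewrite eq_sym => ->; rewrite unif_moment0.
by rewrite (bigD1 a) //= eqxx eq_sym (negbTE ab) unif_moment_odd ?mul0r.
Qed.

Definition cmeasurable (f : T -> R[i]) :=
  measurable_fun setT (fun t => complex.Re (f t)) /\
  measurable_fun setT (fun t => complex.Im (f t)).

Definition cbounded_rv (f : T -> R[i]) := cmeasurable f /\ bounded_on cube_event f.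

Lemma cmeasurable_cst z : cmeasurable (fun=> z).
Proof. by split; exact: measurable_cst. Qed.

Lemma cmeasurableD f g : cmeasurable f -> cmeasurable g -> cmeasurable (fun t => f t + g t).
Proof.
by move=> [mf1 mf2] [mg1 mg2]; split; under eq_fun do rewrite ?ReD ?ImD; exact: measurable_funD.
Qed.

Lemma cmeasurableM f g : cmeasurable f -> cmeasurable g -> cmeasurable (fun t => f t * g t).
Proof.
move=> [mf1 mf2] [mg1 mg2]; split; under eq_fun do rewrite ?ReM ?ImM.
  by apply: measurable_funB; exact: measurable_funM.
by apply: measurable_funD; exact: measurable_funM.
Qed.

Lemma cmeasurableB f g : cmeasurable f -> cmeasurable g -> cmeasurable (fun t => f t - g t).
Proof.
move=> mf mg; have -> : (fun t => f t - g t) = fun t => f t + -1 * g t.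
  by apply: funext => t; rewrite mulN1r.
by apply: cmeasurableD => //; apply: cmeasurableM => //; exact: cmeasurable_cst.
Qed.

Lemma cmeasurableX f n : cmeasurable f -> cmeasurable (fun t => f t ^+ n).
Proof.
move=> mf; elim: n => [|n IH]; first exact: cmeasurable_cst.
have -> : (fun t => f t ^+ n.+1) = fun t => f t * f t ^+ n.
  by apply: funext => t; rewrite exprS.
exact: cmeasurableM.
Qed.

Lemma cbounded_rv_cst z : cbounded_rv (fun=> z).
Proof. by split; [exact: cmeasurable_cst | exact: bounded_on_cst]. Qed.

Lemma cbounded_rvD f g : cbounded_rv f -> cbounded_rv g -> cbounded_rv (fun t => f t + g t).
Proof. by move=> [mf bf] [mg bg]; split; [exact: cmeasurableD | exact: bounded_onD]. Qed.

Lemma cbounded_rvM f g : cbounded_rv f -> cbounded_rv g -> cbounded_rv (fun t => f t * g t).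
Proof. by move=> [mf bf] [mg bg]; split; [exact: cmeasurableM | exact: bounded_onM]. Qed.

Lemma cbounded_rvX f n : cbounded_rv f -> cbounded_rv (fun t => f t ^+ n).
Proof. by move=> [mf bf]; split; [exact: cmeasurableX | exact: bounded_onX]. Qed.

Lemma cbounded_rv_sum (I : Type) (r : seq I) (F : I -> T -> R[i]) :
  (forall i, cbounded_rv (F i)) -> cbounded_rv (fun t => \sum_(i <- r) F i t).
Proof.
move=> bF; elim: r => [|a r IH].
  rewrite (_ : (fun t => _) = fun=> 0); first exact: cbounded_rv_cst.
  by apply: funext => t; rewrite big_nil.
rewrite (_ : (fun t => _) = fun t => F a t + \sum_(i <- r) F i t).
  exact: cbounded_rvD.
by apply: funext => t; rewrite big_cons.
Qed.

Ltac cbounded_rv_closure :=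
  repeat match goal with
  | |- cbounded_rv (fun _ => _ + _) => apply: cbounded_rvD
  | |- cbounded_rv (fun _ => _ * _) => apply: cbounded_rvM
  | |- cbounded_rv (fun _ => _ ^+ _) => apply: cbounded_rvX
  | |- _ => first [exact: cbounded_rv_cst | assumption]
  end.

Lemma cbounded_rv_cR g : bounded_rv g -> cbounded_rv (fun t => cR (g t)).
Proof.
case=> mg [M gM]; split; first by split => //=; exact: measurable_cst.
by exists M => t Ht; rewrite cabs_cR gM.
Qed.

Lemma cbounded_rv_Re f : cbounded_rv f -> bounded_rv (fun t => complex.Re (f t)).
Proof.
by case=> [[mR _] [M fM]]; split => //; exists M => t Ht; rewrite (le_trans (Re_le_cabs _)) ?fM.
Qed.

Lemma cbounded_rv_Im f : cbounded_rv f -> bounded_rv (fun t => complex.Im (f t)).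
Proof.
by case=> [[_ mI] [M fM]]; split => //; exists M => t Ht; rewrite (le_trans (Im_le_cabs _)) ?fM.
Qed.

Definition CEcube (f : T -> R[i]) : R[i] :=
  Complex (Ecube (fun t => complex.Re (f t))) (Ecube (fun t => complex.Im (f t))).

Lemma CEcube_ext f g : {in cube_event, f =1 g} -> CEcube f = CEcube g.
Proof. by move=> fg; rewrite /CEcube !(Ecube_ext (fun t Ht => congr1 _ (fg t Ht))). Qed.

Lemma CEcube_cst z : CEcube (fun=> z) = z.
Proof. by rewrite /CEcube !Ecube_cst; case: z. Qed.

Lemma CEcubeD f g : cbounded_rv f -> cbounded_rv g ->
  CEcube (fun t => f t + g t) = CEcube f + CEcube g.
Proof.
move=> bf bg; rewrite /CEcube.
rewrite (Ecube_ext (fun t _ => ReD (f t) (g t))) (Ecube_ext (fun t _ => ImD (f t) (g t))).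
rewrite !EcubeD //; by [apply: cbounded_rv_Re | apply: cbounded_rv_Im].
Qed.

Lemma CEcubeZ z f : cbounded_rv f -> CEcube (fun t => z * f t) = z * CEcube f.
Proof.
move=> bf; have [bR bI] := (cbounded_rv_Re bf, cbounded_rv_Im bf).
rewrite /CEcube (Ecube_ext (fun t _ => ReM z (f t))) (Ecube_ext (fun t _ => ImM z (f t))).
have bZ c g : bounded_rv g -> bounded_rv (fun t => c * g t).
  by move=> bg; apply: bounded_rvM (bounded_rv_cst c) bg.
rewrite EcubeB ?EcubeD ?EcubeZ //; try exact: bZ.
by case: z.
Qed.

Lemma CEcube_sum (I : Type) (r : seq I) (F : I -> T -> R[i]) :
  (forall i, cbounded_rv (F i)) ->
  CEcube (fun t => \sum_(i <- r) F i t) = \sum_(i <- r) CEcube (F i).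
Proof.
move=> bF; elim: r => [|a r IH].
  by rewrite big_nil -[RHS](CEcube_cst 0); apply: CEcube_ext => t _; rewrite big_nil.
rewrite big_cons -IH -CEcubeD //; last exact: cbounded_rv_sum.
by apply: CEcube_ext => t _; rewrite big_cons.
Qed.

Lemma CEcube_cubic z e f1 f2 f3 : cbounded_rv f1 -> cbounded_rv f2 -> cbounded_rv f3 ->
  CEcube (fun t => z + e * f1 t + e ^+ 2 * f2 t + e ^+ 3 * f3 t) =
  z + e * CEcube f1 + e ^+ 2 * CEcube f2 + e ^+ 3 * CEcube f3.
Proof.
move=> b1 b2 b3; have bZ c f : cbounded_rv f -> cbounded_rv (fun t => c * f t).
  exact: cbounded_rvM (cbounded_rv_cst c).
rewrite !CEcubeD ?CEcube_cst ?CEcubeZ //;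
  by repeat apply: cbounded_rvD; (apply: bZ || apply: cbounded_rv_cst).
Qed.

Lemma CEcube_cR g : CEcube (fun t => cR (g t)) = cR (Ecube g).
Proof. by rewrite /CEcube /= Ecube_cst. Qed.

Lemma ler_cabs_CEcube f M : cbounded_rv f -> (forall t, cube_event t -> cabs (f t) <= M) ->
  cabs (CEcube f) <= M + M.
Proof.
move=> bf fM; rewrite (le_trans (cabs_le_ReIm _)) // lerD //.
  by apply: ler_norm_Ecube (cbounded_rv_Re bf) _ => t Ht; rewrite (le_trans (Re_le_cabs _)) ?fM.
by apply: ler_norm_Ecube (cbounded_rv_Im bf) _ => t Ht; rewrite (le_trans (Im_le_cabs _)) ?fM.
Qed.

Lemma Rintegral_setT_Ecube g : bounded_rv g -> Rintegral P setT g = Ecube g.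
Proof.
move=> bg; have [mg _] := bg.
have mC : measurable (~` cube_event) by apply: measurableC; exact: measurable_cube_event.
have PC : P (~` cube_event) = 0%E.
  by rewrite probability_setC ?prob_cube_event ?subee //; exact: measurable_cube_event.
have eT : [set: T] `\` ~` cube_event = cube_event by rewrite setTD setCK.
have ig : P.-integrable setT (EFin \o g).
  apply/integrableP; split; first exact/measurable_EFinP.
  rewrite (@ge0_negligible_integral _ _ _ P setT (~` cube_event)) // ?eT.
  - by have /integrableP[] := integrable_bounded_rv bg.
  - by apply: measurableT_comp => //; exact/measurable_EFinP.
rewrite /Ecube /Rintegral -eT; congr fine; exact: negligible_integral.
Qed.

Lemma cexpectE f : cbounded_rv f -> cexpect P f = CEcube f.
Proof.
move=> bf; rewrite /cexpect /CEcube !Rintegral_setT_Ecube //.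
  exact: cbounded_rv_Im.
exact: cbounded_rv_Re.
Qed.

Lemma bounded_rv_monomial (s : seq 'I_m) : bounded_rv (fun t => \prod_(j <- s) omega j t).
Proof.
apply: bounded_rv_prod => j.
by apply: (bounded_rv_ext _ (bounded_rv_omegaX j 1)) => t; rewrite expr1.
Qed.

Lemma cbounded_rv_monsum (I : finType) f c :
  cbounded_rv (fun t => @monsum _ _ I f c (fun j => omega j t)).
Proof.
apply: cbounded_rv_sum => i; apply: cbounded_rvM; last exact: cbounded_rv_cst.
exact/cbounded_rv_cR/bounded_rv_monomial.
Qed.

Lemma CEcube_monsum (I : finType) f c :
  CEcube (fun t => @monsum _ _ I f c (fun j => omega j t)) =
  \sum_i cR (Ecube_monomial (f i)) * c i.
Proof.
have bX s : cbounded_rv (fun t => cR (\prod_(j <- s) omega j t)).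
  exact/cbounded_rv_cR/bounded_rv_monomial.
rewrite CEcube_sum => [|i]; last exact: cbounded_rvM (bX _) (cbounded_rv_cst _).
apply: eq_bigr => i _; rewrite -CEcube_cR [RHS]mulrC -CEcubeZ //.
by apply: CEcube_ext => t _; rewrite mulrC.
Qed.

Lemma CEcube_monsum_odd (I : finType) f c : (forall i, odd (size (f i))) ->
  CEcube (fun t => @monsum _ _ I f c (fun j => omega j t)) = 0.
Proof.
by move=> odd_f; rewrite CEcube_monsum big1 // => i _; rewrite Ecube_monomial_odd ?mul0r.
Qed.

(** * Moments of the perturbed field *)

Section ShapeMoments.
Variables (u0 : R[i]) (D : forall q : nat, q.-tuple 'I_m -> R[i]).

Local Notation coef k t := (shape_coef D k (fun i => omega i t)).

Lemma shape_coef_monsum k (w : 'I_m -> R) : shape_coef D k w =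
  monsum (fun s : k.-tuple 'I_m => tval s) (fun s => cR (k`!%:R)^-1 * D s) w.
Proof. exact: monsumZ. Qed.

Lemma cbounded_shape_coef k : cbounded_rv (fun t => coef k t).
Proof. by under eq_fun do rewrite shape_coef_monsum; exact: cbounded_rv_monsum. Qed.

Lemma CEcube_shape_coef2 :
  CEcube (fun t => coef 2 t) = cR (1 / 2) * (cR 3^-1 * \sum_i D [tuple i; i]).
Proof.
rewrite /shape_coef CEcubeZ; last exact/cbounded_rv_monsum.
rewrite CEcube_monsum sum_tuple2 div1r.
by under eq_bigr do under eq_bigr do rewrite Ecube_monomial2 (fun_if (@cR R)) cR0; rewrite sum_diag.
Qed.

Lemma CEcube_shape_coef1_sqr :
  CEcube (fun t => coef 1 t ^+ 2) = cR 3^-1 * \sum_i D [tuple i] ^+ 2.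
Proof.
under eq_fun do rewrite shape_coef_monsum expr2 monsumM.
pose c (s : 1.-tuple 'I_m) := cR (1`!%:R)^-1 * D s.
rewrite CEcube_monsum -(pair_bigA _ (fun s s' =>
  cR (Ecube_monomial (tval s ++ tval s')) * (c s * c s'))) /= sum_tuple1.
under [X in X = _]eq_bigr do rewrite sum_tuple1 /=.
under [X in X = _]eq_bigr do under eq_bigr do rewrite Ecube_monomial2 (fun_if (@cR R)) cR0.
rewrite sum_diag; congr (_ * _); apply: eq_bigr => i _.
by rewrite /c /= mulr1n invr1 mul1r expr2.
Qed.

Lemma CEcube_shape_coef_odd k : odd k -> CEcube (fun t => coef k t) = 0.
Proof.
move=> odd_k; under eq_fun do rewrite shape_coef_monsum.
by apply: CEcube_monsum_odd => s; rewrite size_tuple.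
Qed.

Lemma CEcube_shape_coef12 : CEcube (fun t => coef 1 t * coef 2 t) = 0.
Proof.
under eq_fun do rewrite !shape_coef_monsum monsumM.
by apply: CEcube_monsum_odd => p; rewrite size_cat !size_tuple.
Qed.

Lemma CEcube_shape_coef1_cube : CEcube (fun t => coef 1 t ^+ 3) = 0.
Proof.
under eq_fun do rewrite shape_coef_monsum !exprS expr0 mulr1 !monsumM.
by apply: CEcube_monsum_odd => p; rewrite !size_cat !size_tuple.
Qed.

Lemma CEcube_pow_expand3 n (eps : R) :
  CEcube (fun t => pow_expand3 n u0 (coef 1 t) (coef 2 t) (coef 3 t) (cR eps)) =
  u0 ^+ n + cR eps ^+ 2 * ('C(n, 1)%:R * u0 ^+ (n - 1) * CEcube (fun t => coef 2 t)
                          + 'C(n, 2)%:R * u0 ^+ (n - 2) * CEcube (fun t => coef 1 t ^+ 2)).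
Proof.
have b1 := cbounded_shape_coef 1; have b2 := cbounded_shape_coef 2.
have b3 := cbounded_shape_coef 3; have b12 := cbounded_rvM b1 b2.
have b1X2 := cbounded_rvX 2 b1; have b1X3 := cbounded_rvX 3 b1.
rewrite /pow_expand3 CEcube_cubic; try by cbounded_rv_closure.
rewrite !CEcubeD; try by cbounded_rv_closure.
rewrite !(CEcubeZ ('C(n, 1)%:R * u0 ^+ (n - 1))) // (CEcubeZ ('C(n, 2)%:R * u0 ^+ (n - 2))) //.
rewrite (CEcubeZ (2%:R * 'C(n, 2)%:R * u0 ^+ (n - 2))) //.
rewrite (CEcubeZ ('C(n, 3)%:R * u0 ^+ (n - 3))) //.
rewrite CEcube_shape_coef12 CEcube_shape_coef1_cube.
by rewrite (@CEcube_shape_coef_odd 1) // (@CEcube_shape_coef_odd 3) // !(mulr0, addr0).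
Qed.

End ShapeMoments.

Lemma moment_expansion N U u0 (D : forall q : nat, q.-tuple 'I_m -> R[i]) n :
  (3 <= N)%N -> shape_taylor N U u0 D ->
  (exists delta0 : R, 0 < delta0 /\ forall eps : R, `|eps| < delta0 ->
     cmeasurable (fun t => U eps (fun i => omega i t))) ->
  eq_O4 (moment omega U n) (fun eps => u0 ^+ n + cR (eps ^+ 2 / 3%:R) *
    \sum_(i < m) ('C(n, 2)%:R * u0 ^+ (n - 2) * D 1%N [tuple i] ^+ 2
                  + 'C(n, 1)%:R * u0 ^+ (n - 1) * (cR (1 / 2) * D 2%N [tuple i; i]))).
Proof.
move=> N3 HT [delta0 [delta0_gt0 mU]].
have [C [delta [delta_gt0 UQ]]] := shape_taylor_exprn n N3 HT.
exists (C + C), (Num.min delta delta0); split=> [|eps]; first by rewrite lt_min delta_gt0.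
rewrite lt_min => /andP[e_delta e_delta0].
pose Q t := pow_expand3 n u0 (shape_coef D 1 (fun i => omega i t))
  (shape_coef D 2 (fun i => omega i t)) (shape_coef D 3 (fun i => omega i t)) (cR eps).
pose Un t := U eps (fun i => omega i t) ^+ n.
have bQ : cbounded_rv Q.
  have b1 := cbounded_shape_coef D 1; have b2 := cbounded_shape_coef D 2.
  have b3 := cbounded_shape_coef D 3.
  by rewrite /Q /pow_expand3; cbounded_rv_closure.
have UQ_le t : cube_event t -> cabs (Un t - Q t) <= C * `|eps| ^+ 4.
  by move=> /cube_event_in_cube; exact: UQ.
have bUQ : cbounded_rv (fun t => Un t - Q t).
  split; last by exists (C * `|eps| ^+ 4).
  by apply: cmeasurableB; [exact/cmeasurableX/mU | case: bQ].
have bUn : cbounded_rv Un.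
  have -> : Un = fun t => (Un t - Q t) + Q t by apply: funext => t; rewrite subrK.
  exact: cbounded_rvD.
rewrite /moment cexpectE // -/Un (CEcube_ext (fun t _ => esym (subrK (Q t) (Un t)))).
rewrite CEcubeD // CEcube_pow_expand3 CEcube_shape_coef2 CEcube_shape_coef1_sqr.
rewrite [X in cabs X](_ : _ = CEcube (fun t => Un t - Q t)).
  by rewrite mulrDl; exact: ler_cabs_CEcube.
by rewrite big_split /= -!mulr_sumr cRM cRX; ring.
Qed.

End UniformMoments.

Theorem theorem4p1 (R : realType) (d : measure_display) (T : measurableType d)
  (P : probability T R) (m N : nat) (omega : 'I_m -> {RV P >-> R})
  (U : R -> ('I_m -> R) -> R[i]) (u0 : R[i])
  (D : forall q : nat, q.-tuple 'I_m -> R[i]) :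
  mutually_independent omega ->
  (forall i, uniform_m11 (omega i)) ->
  (3 <= N)%N ->
  shape_taylor N U u0 D ->
  (exists delta0 : R, 0 < delta0 /\ forall eps : R, `|eps| < delta0 ->
     measurable_fun setT (fun t => complex.Re (U eps (fun i => omega i t))) /\
     measurable_fun setT (fun t => complex.Im (U eps (fun i => omega i t)))) ->
  [/\ eq_O4 (moment omega U 1)
        (fun eps => u0 + cR (eps ^+ 2 / (3`!)%:R) *
                         \sum_(i < m) D 2%N [tuple i; i]),
      eq_O4 (moment omega U 2)
        (fun eps => u0 ^+ 2 + cR (eps ^+ 2 / 3%:R) *
            \sum_(i < m) ((D 1%N [tuple i]) ^+ 2 + u0 * D 2%N [tuple i; i]))
    & forall n : nat, (2 < n)%N ->
      eq_O4 (moment omega U n)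
        (fun eps => u0 ^+ n + cR (eps ^+ 2 / 3%:R) *
            \sum_(i < m) ('C(n, 2)%:R * u0 ^+ (n - 2) * (D 1%N [tuple i]) ^+ 2
                          + 'C(n, 1)%:R * u0 ^+ (n - 1) * (cR (1 / 2) * D 2%N [tuple i; i])))].
Proof.
move=> indep unif N3 HT HU.
have expand n := moment_expansion indep unif n N3 HT HU.
have eq_O4_eq f g g' : eq_O4 f g -> g =1 g' -> eq_O4 f g' by move=> + /funext <-.
split=> [||n _]; last exact: expand.
- apply: eq_O4_eq (expand 1%N) _ => eps.
  under eq_bigr do rewrite bin_small // mulr0n !mul0r add0r binn subnn expr0 mulr1n !mul1r.
  by rewrite -mulr_sumr mulrA -cRM expr1 -mulrA -invfM -natrM.
- apply: eq_O4_eq (expand 2%N) _ => eps; congr (_ + _ * _); apply: eq_bigr => i _.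
  by rewrite binn bin1 div1r cRV cRn; field.
Qed.
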